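(* Let $b>0$ and $\psi,x_0,x_\infty$ be as in the context. Then $(x-c)\psi'(x)-\psi(x)<0$ for all $x<x_0$, and $(x-c)\psi''(x)-\psi'(x)>0$ for all $x>x_\infty$.
   Context: Constants: $a\in\mathbb{R}$, $b>0$, $\sigma>0$, $\rho>0$, $c>0$. For $\beta<0$, let $D_\beta(x)=\frac{e^{-x^2/4}}{\Gamma(-\beta)}\int_0^\infty t^{-\beta-1}e^{-t^2/2-xt}\,dt$, and $\psi(x)=e^{\frac{(bx-a)^2}{2\sigma^2 b}}D_{-\rho/b}\big(-\frac{bx-a}{\sigma b}\sqrt{2b}\big)$, the positive strictly increasing fundamental solution of $\frac12\sigma^2u''+(a-bx)u'-\rho u=0$. Let $x_0$ be the unique solution on $(c,\infty)$ of $(x-c)\psi'(x)-\psi(x)=0$ and $x_\infty$ the unique solution on $(c,\infty)$ of $(x-c)\psi''(x)-\psi'(x)=0$. *)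

From Stdlib Require Import Reals.
From Coquelicot Require Import Coquelicot.
Open Scope R_scope.

Definition Gamma_fn (s : R) : R :=
  RInt_gen (fun t => Rpower t (s - 1) * exp (- t)) (at_right 0) (Rbar_locally p_infty).

(* Parabolic cylinder function, integral representation valid for beta < 0:
   D_beta(x) = e^{-x^2/4}/Gamma(-beta) * \int_0^\infty t^{-beta-1} e^{-t^2/2 - x t} dt. *)
Definition D_par (beta x : R) : R :=
  exp (- x ^ 2 / 4) / Gamma_fn (- beta) *
  RInt_gen (fun t => Rpower t (- beta - 1) * exp (- t ^ 2 / 2 - x * t))
           (at_right 0) (Rbar_locally p_infty).

Definition psi (a b sigma rho : R) (x : R) : R :=
  exp ((b * x - a) ^ 2 / (2 * sigma ^ 2 * b)) *
  D_par (- rho / b) (- (b * x - a) / (sigma * b) * sqrt (2 * b)).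

(* With nu = rho/b and k(x) = (b x - a) sqrt(2b) / (sigma b), the Gaussian prefactors cancel and
   psi(x) = Gamma(nu)^-1 * \int_0^oo t^(nu-1) exp(-t^2/2 + k(x) t) dt.
   Differentiating under the integral sign shows that every derivative psi^(n) is positive.
   Hence g(x) = (x - c) psi'(x) - psi(x) has g' = (x - c) psi'' > 0 on (c, oo), so g < g(x0) = 0
   on (c, x0), and g < 0 on (-oo, c] since psi > 0 and psi' > 0; likewise the derivative of
   (x - c) psi''(x) - psi'(x) is (x - c) psi''' > 0 on (c, oo). *)

From Stdlib Require Import Reals Lra FunctionalExtensionality Classical_Prop.
From Coquelicot Require Import Coquelicot.
Open Scope R_scope.

Section HalfLineIntegrals.

Variable h : R -> R.
Hypothesis h_cont : forall t, 0 < t -> continuous h t.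

Lemma ex_RInt_pos_halfline u v : 0 < u -> u <= v -> ex_RInt h u v.
Proof.
  intros Hu Huv. apply (ex_RInt_continuous (V := R_CompleteNormedModule)).
  intros z Hz. apply h_cont. rewrite Rmin_left in Hz; lra.
Qed.

Lemma RInt_nonneg_le_wider a a' b' b :
  (forall t, 0 < t -> 0 <= h t) ->
  0 < a -> a <= a' -> a' < b' -> b' <= b -> RInt h a' b' <= RInt h a b.
Proof.
  intros Hpos Ha Ha' Hab' Hb.
  rewrite <- (RInt_Chasles h a a' b), <- (RInt_Chasles h a' b' b)
    by (apply ex_RInt_pos_halfline; lra).
  assert (0 <= RInt h a a')
    by (apply RInt_ge_0; [lra | apply ex_RInt_pos_halfline; lra | intros; apply Hpos; lra]).
  assert (0 <= RInt h b' b)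
    by (apply RInt_ge_0; [lra | apply ex_RInt_pos_halfline; lra | intros; apply Hpos; lra]).
  unfold plus; simpl. lra.
Qed.

End HalfLineIntegrals.

Lemma filter_prod_0_pinfty (P : R * R -> Prop) a0 b0 : 0 < a0 ->
  (forall a b, 0 < a < a0 -> b0 < b -> P (a, b)) ->
  filter_prod (at_right 0) (Rbar_locally p_infty) P.
Proof.
  intros Ha0 HP. apply (Filter_prod _ _ _ (fun a => 0 < a < a0) (fun b => b0 < b)).
  - exists (mkposreal a0 Ha0). intros y Hy Hy_pos. simpl in Hy.
    unfold ball in Hy; simpl in Hy; unfold AbsRing_ball, abs, minus, plus, opp in Hy; simpl in Hy.
    apply Rabs_lt_between in Hy. lra.
  - exists b0. auto.
  - intros a b Ha Hb. apply HP; auto.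
Qed.

Lemma lub_approx (E : R -> Prop) L eps :
  is_lub E L -> 0 < eps -> exists y, E y /\ L - eps < y.
Proof.
  intros [_ Hleast] Heps. apply NNPP. intros Hnot.
  assert (L <= L - eps); [|lra].
  apply Hleast. intros y Hy. apply Rnot_lt_le. intros Hlt. apply Hnot. eauto.
Qed.

Lemma is_RInt_gen_nonneg_bounded (h : R -> R) (B : R) :
  (forall t, 0 < t -> continuous h t) -> (forall t, 0 < t -> 0 <= h t) ->
  (forall a b, 0 < a -> a < b -> RInt h a b <= B) ->
  exists L, is_RInt_gen h (at_right 0) (Rbar_locally p_infty) L /\
            (forall a b, 0 < a -> a < b -> RInt h a b <= L).
Proof.
  intros Hcont Hpos HB.
  set (E := fun y => exists a b, 0 < a /\ a < b /\ y = RInt h a b).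
  assert (HE_bound : bound E) by (exists B; intros y (a & b & Ha & Hab & ->); auto).
  assert (HE_inhabited : exists y, E y) by (exists (RInt h 1 2), 1, 2; repeat split; lra).
  destruct (completeness E HE_bound HE_inhabited) as [L HL].
  assert (HLub : forall a b, 0 < a -> a < b -> RInt h a b <= L)
    by (intros a b Ha Hab; apply HL; exists a, b; auto).
  exists L. split; [|exact HLub].
  intros P [eps HP].
  destruct (lub_approx E L eps HL (cond_pos eps)) as (y & (a0 & b0 & Ha0 & Hab0 & ->) & Hclose).
  apply (filter_prod_0_pinfty _ a0 b0 Ha0). intros a b Ha Hb. simpl.
  exists (RInt h a b). split.
  - apply (RInt_correct (V := R_CompleteNormedModule)), ex_RInt_pos_halfline; auto; lra.
  - apply HP. apply Rabs_lt_between.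
    assert (RInt h a0 b0 <= RInt h a b) by (apply RInt_nonneg_le_wider; auto; lra).
    assert (RInt h a b <= L) by (apply HLub; lra).
    unfold minus, plus, opp; simpl. lra.
Qed.

Lemma RInt_gen_pos_halfline (h : R -> R) (B : R) :
  (forall t, 0 < t -> continuous h t) -> (forall t, 0 < t -> 0 < h t) ->
  (forall a b, 0 < a -> a < b -> RInt h a b <= B) ->
  is_RInt_gen h (at_right 0) (Rbar_locally p_infty)
    (RInt_gen h (at_right 0) (Rbar_locally p_infty)) /\
  0 < RInt_gen h (at_right 0) (Rbar_locally p_infty).
Proof.
  intros Hcont Hpos HB.
  destruct (is_RInt_gen_nonneg_bounded h B) as (L & HL & HLub); auto.
  { intros t Ht. left. auto. }
  rewrite (is_RInt_gen_unique _ _ HL). split; [exact HL|].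
  apply Rlt_le_trans with (RInt h 1 2); [|apply HLub; lra].
  apply RInt_gt_0; [lra | intros; apply Hpos; lra | intros; apply Hcont; lra].
Qed.

Lemma exp_le_compat x y : x <= y -> exp x <= exp y.
Proof.
  intros [Hlt | ->]; [left; apply exp_increasing; exact Hlt | right; reflexivity].
Qed.

Lemma ln_le_sub_1 u : 0 < u -> ln u <= u - 1.
Proof. intros Hu. pose proof (exp_ineq1_le (ln u)) as Hexp. rewrite exp_ln in Hexp by exact Hu. lra. Qed.

Lemma Rpower_pos t p : 0 < Rpower t p.
Proof. apply exp_pos. Qed.

Lemma continuous_Rpower p t : 0 < t -> continuous (fun t => Rpower t p) t.
Proof.
  intros Ht. apply (ex_derive_continuous (K := R_AbsRing) (V := R_NormedModule)).
  unfold Rpower. auto_derive. exact Ht.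
Qed.

Lemma Rpower_le_exp nu eps t : 0 < nu -> 0 < eps -> 0 < t ->
  Rpower t nu <= Rpower (nu / eps) nu * exp (eps * t).
Proof.
  intros Hnu Heps Ht. unfold Rpower at 1 2. rewrite <- exp_plus. apply exp_le_compat.
  assert (Hq : 0 < nu / eps) by (apply Rdiv_lt_0_compat; lra).
  assert (Hr : 0 < t / (nu / eps)) by (apply Rdiv_lt_0_compat; lra).
  replace (ln t) with (ln (nu / eps) + ln (t / (nu / eps))).
  2: { rewrite <- ln_mult by lra. f_equal. field. lra. }
  pose proof (ln_le_sub_1 _ Hr).
  assert (nu * ln (t / (nu / eps)) <= nu * (t / (nu / eps))) by (apply Rmult_le_compat_l; lra).
  replace (nu * (t / (nu / eps))) with (eps * t) in * by (field; lra).
  lra.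
Qed.

Lemma one_plus_Rpower_sq_le nu eps : 0 < nu -> 0 < eps ->
  exists C, forall t, 0 < t -> (1 + Rpower t nu) ^ 2 <= C * exp (eps * t).
Proof.
  intros Hnu Heps. set (C0 := Rpower (nu / (eps / 2)) nu).
  exists ((1 + C0) ^ 2). intros t Ht.
  assert (Hexp : 1 <= exp (eps / 2 * t)) by (rewrite <- exp_0; apply exp_le_compat; nra).
  assert (Hle : 1 + Rpower t nu <= (1 + C0) * exp (eps / 2 * t)).
  { pose proof (Rpower_le_exp nu (eps / 2) t Hnu ltac:(lra) Ht) as Hpow. fold C0 in Hpow.
    assert (0 < C0) by apply Rpower_pos. nra. }
  replace (eps * t) with (eps / 2 * t + eps / 2 * t) by field. rewrite exp_plus.
  replace ((1 + C0) ^ 2 * (exp (eps / 2 * t) * exp (eps / 2 * t)))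
    with (((1 + C0) * exp (eps / 2 * t)) ^ 2) by ring.
  apply pow_incr. pose proof (Rpower_pos t nu). lra.
Qed.

Lemma is_derive_Rpower_primitive nu t : 0 < t ->
  is_derive (fun t => - / (1 + Rpower t nu)) t
    (nu * Rpower t (nu - 1) / (1 + Rpower t nu) ^ 2).
Proof.
  intros Ht. unfold Rpower. pose proof (exp_pos (nu * ln t)). auto_derive.
  - repeat split; auto. lra.
  - replace ((nu - 1) * ln t) with (nu * ln t + - ln t) by ring.
    rewrite exp_plus, exp_Ropp, exp_ln by exact Ht. field. lra.
Qed.

Section PowerWeight.

Variables (nu K : R) (phi : R -> R).
Hypothesis nu_pos : 0 < nu.
Hypothesis phi_cont : forall t, 0 < t -> continuous phi t.
Hypothesis phi_pos : forall t, 0 < t -> 0 < phi t.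
Hypothesis phi_decay : forall t, 0 < t -> phi t * (1 + Rpower t nu) ^ 2 <= K.

Let weighted t := Rpower t (nu - 1) * phi t.

Lemma continuous_weighted t : 0 < t -> continuous weighted t.
Proof.
  intros Ht. apply (continuous_mult (fun t => Rpower t (nu - 1)) phi).
  - apply continuous_Rpower, Ht.
  - apply phi_cont, Ht.
Qed.

(* [t^(nu-1) phi t <= (K/nu) P'(t)] for the increasing primitive [P t = -1/(1+t^nu)], which
   rises from -1 to 0. *)
Lemma RInt_weighted_le a b : 0 < a -> a < b -> RInt weighted a b <= K / nu.
Proof.
  intros Ha Hab.
  set (P := fun t => - / (1 + Rpower t nu)).
  set (dP := fun t => nu * Rpower t (nu - 1) / (1 + Rpower t nu) ^ 2).
  assert (HdP : is_RInt dP a b (P b - P a)).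
  { apply (is_RInt_derive P dP); rewrite Rmin_left, Rmax_right by lra; intros t Ht.
    - apply is_derive_Rpower_primitive. lra.
    - apply (ex_derive_continuous (K := R_AbsRing) (V := R_NormedModule)).
      unfold dP, Rpower. pose proof (exp_pos (nu * ln t)). auto_derive.
      repeat split; try lra. intro. nra. }
  assert (HKdP : is_RInt (fun t => K / nu * dP t) a b (K / nu * (P b - P a)))
    by exact (is_RInt_scal _ _ _ _ _ HdP).
  apply Rle_trans with (K / nu * (P b - P a)).
  - rewrite <- (is_RInt_unique _ _ _ _ HKdP). apply RInt_le; [lra | | eexists; exact HKdP |].
    + apply ex_RInt_pos_halfline; [exact continuous_weighted | lra | lra].
    + intros t Ht. unfold weighted, dP.
      specialize (phi_decay t ltac:(lra)). pose proof (Rpower_pos t (nu - 1)).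
      pose proof (Rpower_pos t nu).
      assert (Hq : 0 < (1 + Rpower t nu) ^ 2) by (apply pow_lt; lra).
      replace (K / nu * (nu * Rpower t (nu - 1) / (1 + Rpower t nu) ^ 2))
        with (Rpower t (nu - 1) * (K / (1 + Rpower t nu) ^ 2)) by (field; split; lra).
      apply Rmult_le_compat_l; [lra|]. apply Rle_div_r; lra.
  - assert (0 <= K).
    { specialize (phi_decay 1 Rlt_0_1). specialize (phi_pos 1 Rlt_0_1).
      pose proof (pow2_ge_0 (1 + Rpower 1 nu)). nra. }
    assert (0 < / (1 + Rpower b nu)) by (pose proof (Rpower_pos b nu); apply Rinv_0_lt_compat; lra).
    assert (/ (1 + Rpower a nu) < 1).
    { pose proof (Rpower_pos a nu). rewrite <- Rinv_1. apply Rinv_lt_contravar; lra. }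
    assert (K / nu * (P b - P a) <= K / nu * 1); [|lra].
    apply Rmult_le_compat_l; [apply Rdiv_le_0_compat; lra | unfold P; lra].
Qed.

Lemma RInt_gen_weighted_spec :
  is_RInt_gen weighted (at_right 0) (Rbar_locally p_infty)
    (RInt_gen weighted (at_right 0) (Rbar_locally p_infty)) /\
  0 < RInt_gen weighted (at_right 0) (Rbar_locally p_infty).
Proof.
  apply (RInt_gen_pos_halfline _ (K / nu)).
  - exact continuous_weighted.
  - intros t Ht. apply Rmult_lt_0_compat; [apply Rpower_pos | apply phi_pos, Ht].
  - exact RInt_weighted_le.
Qed.

End PowerWeight.

Lemma Gamma_fn_pos nu : 0 < nu -> 0 < Gamma_fn nu.
Proof.
  intros Hnu. destruct (one_plus_Rpower_sq_le nu 1 Hnu Rlt_0_1) as [C HC].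
  apply (RInt_gen_weighted_spec nu C (fun t => exp (- t))); [exact Hnu | | |].
  - intros t _. apply (ex_derive_continuous (K := R_AbsRing) (V := R_NormedModule)).
    auto_derive. exact I.
  - intros t _. apply exp_pos.
  - intros t Ht. specialize (HC t Ht). pose proof (exp_pos (- t)).
    apply Rle_trans with (exp (- t) * (C * exp (1 * t))); [apply Rmult_le_compat_l; lra|].
    replace (exp (- t) * (C * exp (1 * t))) with (C * exp (- t + 1 * t)) by (rewrite exp_plus; ring).
    replace (- t + 1 * t) with 0 by ring. rewrite exp_0. lra.
Qed.

Lemma pow_le_exp t n : 0 < t -> t ^ n <= exp (INR n * t).
Proof.
  intros Ht. induction n as [|n IH].
  - simpl. rewrite Rmult_0_l, exp_0. lra.
  - rewrite S_INR. replace ((INR n + 1) * t) with (t + INR n * t) by ring.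
    rewrite exp_plus. simpl. pose proof (exp_ineq1_le t).
    apply Rmult_le_compat; [lra | apply pow_le; lra | lra | exact IH].
Qed.

Definition gauss_integrand nu n k t := Rpower t (nu - 1) * (t ^ n * exp (- t ^ 2 / 2 + k * t)).

Definition gauss_moment nu n k :=
  RInt_gen (gauss_integrand nu n k) (at_right 0) (Rbar_locally p_infty).

Lemma gauss_moment_spec nu n k : 0 < nu ->
  is_RInt_gen (gauss_integrand nu n k) (at_right 0) (Rbar_locally p_infty) (gauss_moment nu n k) /\
  0 < gauss_moment nu n k.
Proof.
  intros Hnu. destruct (one_plus_Rpower_sq_le nu 1 Hnu Rlt_0_1) as [C HC].
  set (A := Rabs k + INR n + 1).
  apply (RInt_gen_weighted_spec nu (C * exp (A ^ 2 / 2))); [exact Hnu | | |].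
  - intros t _. apply (ex_derive_continuous (K := R_AbsRing) (V := R_NormedModule)).
    auto_derive. exact I.
  - intros t Ht. apply Rmult_lt_0_compat; [apply pow_lt, Ht | apply exp_pos].
  - intros t Ht. specialize (HC t Ht).
    pose proof (pow_le_exp t n Ht). pose proof (pow_le t n ltac:(lra)).
    pose proof (exp_pos (- t ^ 2 / 2 + k * t)).
    apply Rle_trans with (exp (INR n * t) * exp (- t ^ 2 / 2 + k * t) * (C * exp (1 * t))).
    { apply Rmult_le_compat; [| apply pow2_ge_0 | apply Rmult_le_compat_r |]; nra. }
    replace (exp (INR n * t) * exp (- t ^ 2 / 2 + k * t) * (C * exp (1 * t)))
      with (C * exp (INR n * t + (- t ^ 2 / 2 + k * t) + 1 * t)) by (rewrite !exp_plus; ring).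
    assert (0 <= C) by (pose proof (exp_pos (1 * t)); pose proof (pow2_ge_0 (1 + Rpower t nu)); nra).
    apply Rmult_le_compat_l; [lra|]. apply exp_le_compat.
    assert (k * t <= Rabs k * t) by (apply Rmult_le_compat_r; [lra | apply RRle_abs]).
    pose proof (pow2_ge_0 (t - A)). unfold A in *. nra.
Qed.

Lemma exp_mul_one_sub_le u : exp u * (1 - u) <= 1.
Proof.
  pose proof (exp_ineq1_le (- u)). pose proof (exp_pos u).
  replace 1 with (exp u * exp (- u)) at 2 by (rewrite <- exp_plus, Rplus_opp_r; apply exp_0).
  apply Rmult_le_compat_l; lra.
Qed.

Lemma Rabs_exp_sub_1_le u : Rabs (exp u - 1) <= Rabs u * exp (Rabs u).
Proof.
  pose proof (exp_ineq1_le u). pose proof (exp_mul_one_sub_le u).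
  destruct (Rle_or_lt 0 u) as [Hu | Hu].
  - assert (1 <= exp u) by (rewrite <- exp_0; apply exp_le_compat; lra).
    rewrite !Rabs_right by lra. nra.
  - assert (exp u <= 1) by (rewrite <- exp_0; apply exp_le_compat; lra).
    assert (1 <= exp (- u)) by (rewrite <- exp_0; apply exp_le_compat; lra).
    rewrite Rabs_left1, Rabs_left by lra. nra.
Qed.

Lemma Rabs_exp_sub_1_sub_le u : Rabs (exp u - 1 - u) <= u ^ 2 * exp (Rabs u).
Proof.
  pose proof (exp_ineq1_le u). pose proof (exp_mul_one_sub_le u).
  rewrite Rabs_right by lra.
  apply Rle_trans with (Rabs u * Rabs (exp u - 1)).
  - rewrite <- Rabs_mult. apply Rle_trans with (u * (exp u - 1)); [lra | apply RRle_abs].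
  - replace (u ^ 2) with (Rabs u * Rabs u) by (rewrite <- Rabs_mult, Rabs_right; [ring | nra]).
    rewrite Rmult_assoc. apply Rmult_le_compat_l; [apply Rabs_pos | apply Rabs_exp_sub_1_le].
Qed.

Lemma is_derive_of_quadratic_remainder (f : R -> R) x l C :
  (forall h, Rabs h <= 1 -> Rabs (f (x + h) - f x - h * l) <= C * h ^ 2) ->
  is_derive f x l.
Proof.
  intros Hrem. apply is_derive_Reals. intros eps Heps.
  set (C' := Rabs C + 1).
  assert (HC' : 0 < C') by (pose proof (Rabs_pos C); unfold C'; lra).
  assert (Hdelta : 0 < Rmin 1 (eps / C')) by (apply Rmin_pos; [lra | apply Rdiv_lt_0_compat; lra]).
  exists (mkposreal _ Hdelta). intros h Hh0 Hh. simpl in Hh.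
  pose proof (Rmin_l 1 (eps / C')). pose proof (Rmin_r 1 (eps / C')).
  assert (Habs : 0 < Rabs h) by (apply Rabs_pos_lt, Hh0).
  specialize (Hrem h ltac:(lra)).
  replace ((f (x + h) - f x) / h - l) with ((f (x + h) - f x - h * l) / h) by (field; exact Hh0).
  unfold Rdiv. rewrite Rabs_mult, Rabs_inv.
  apply (Rmult_lt_reg_r (Rabs h)); [exact Habs|].
  rewrite Rmult_assoc, Rinv_l, Rmult_1_r by lra.
  assert (Hsq : h ^ 2 = Rabs h * Rabs h) by (rewrite <- Rabs_mult, Rabs_right; [ring | nra]).
  assert (C * h ^ 2 <= C' * (Rabs h * Rabs h)).
  { rewrite Hsq. apply Rmult_le_compat_r; [nra|]. pose proof (RRle_abs C). unfold C'. lra. }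
  assert (C' * Rabs h < eps).
  { apply (Rmult_lt_reg_r (/ C')); [apply Rinv_0_lt_compat, HC'|].
    rewrite Rmult_comm, <- Rmult_assoc, Rinv_l by lra. lra. }
  nra.
Qed.

Lemma gauss_integrand_taylor nu n k h t : 0 < t -> Rabs h <= 1 ->
  Rabs (gauss_integrand nu n (k + h) t - gauss_integrand nu n k t - h * gauss_integrand nu (S n) k t)
  <= h ^ 2 * gauss_integrand nu (S (S n)) (k + 1) t.
Proof.
  intros Ht Hh. unfold gauss_integrand.
  set (W := Rpower t (nu - 1) * (t ^ n * exp (- t ^ 2 / 2 + k * t))).
  assert (HW : 0 <= W).
  { apply Rmult_le_pos; [left; apply Rpower_pos|].
    apply Rmult_le_pos; [apply pow_le; lra | left; apply exp_pos]. }
  assert (Hshift : forall d, exp (- t ^ 2 / 2 + (k + d) * t) = exp (- t ^ 2 / 2 + k * t) * exp (d * t)).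
  { intros d. rewrite <- exp_plus. f_equal. ring. }
  rewrite !Hshift, Rmult_1_l.
  replace (Rpower t (nu - 1) * (t ^ n * (exp (- t ^ 2 / 2 + k * t) * exp (h * t))) - W
           - h * (Rpower t (nu - 1) * (t ^ S n * exp (- t ^ 2 / 2 + k * t))))
    with (W * (exp (h * t) - 1 - h * t)) by (unfold W; simpl; ring).
  replace (h ^ 2 * (Rpower t (nu - 1) * (t ^ S (S n) * (exp (- t ^ 2 / 2 + k * t) * exp t))))
    with (W * ((h * t) ^ 2 * exp t)) by (unfold W; simpl; ring).
  rewrite Rabs_mult, (Rabs_right W) by lra.
  apply Rmult_le_compat_l; [exact HW|].
  eapply Rle_trans; [apply Rabs_exp_sub_1_sub_le|].
  apply Rmult_le_compat_l; [apply pow2_ge_0|]. apply exp_le_compat.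
  rewrite Rabs_mult, (Rabs_right t) by lra. nra.
Qed.

Lemma gauss_moment_taylor nu n k h : 0 < nu -> Rabs h <= 1 ->
  Rabs (gauss_moment nu n (k + h) - gauss_moment nu n k - h * gauss_moment nu (S n) k)
  <= h ^ 2 * gauss_moment nu (S (S n)) (k + 1).
Proof.
  intros Hnu Hh.
  destruct (gauss_moment_spec nu n (k + h) Hnu) as [I1 _].
  destruct (gauss_moment_spec nu n k Hnu) as [I2 _].
  destruct (gauss_moment_spec nu (S n) k Hnu) as [I3 _].
  destruct (gauss_moment_spec nu (S (S n)) (k + 1) Hnu) as [I4 _].
  refine (RInt_gen_norm _ _ _ _ _ _
            (is_RInt_gen_minus _ _ _ _ (is_RInt_gen_minus _ _ _ _ I1 I2) (is_RInt_gen_scal _ h _ I3))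
            (is_RInt_gen_scal _ (h ^ 2) _ I4)).
  - apply (filter_prod_0_pinfty _ 1 1 Rlt_0_1). intros; simpl; lra.
  - apply (filter_prod_0_pinfty _ 1 1 Rlt_0_1). intros a b Ha Hb t Ht. simpl in Ht.
    apply gauss_integrand_taylor; [lra | exact Hh].
Qed.

Lemma is_derive_gauss_moment nu n k : 0 < nu ->
  is_derive (gauss_moment nu n) k (gauss_moment nu (S n) k).
Proof.
  intros Hnu. apply (is_derive_of_quadratic_remainder _ _ _ (gauss_moment nu (S (S n)) (k + 1))).
  intros h Hh. rewrite (Rmult_comm _ (h ^ 2)). apply gauss_moment_taylor; assumption.
Qed.

Lemma tangent_gap_increasing (f f1 f2 : R -> R) c x y :
  (forall z, is_derive f z (f1 z)) -> (forall z, is_derive f1 z (f2 z)) ->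
  (forall z, c < z -> 0 < f2 z) -> c <= x -> x < y ->
  (x - c) * f1 x - f x < (y - c) * f1 y - f y.
Proof.
  intros Hf Hf1 Hf2 Hcx Hxy.
  set (g z := (z - c) * f1 z - f z).
  assert (Hg : forall z, is_derive g z ((z - c) * f2 z)).
  { intros z. unfold g.
    replace ((z - c) * f2 z) with (1 * f1 z + (z - c) * f2 z - f1 z) by ring.
    apply (is_derive_minus (fun z => (z - c) * f1 z) f); [|apply Hf].
    apply (is_derive_mult (fun z => z - c) f1); [| apply Hf1 | intros; apply Rmult_comm].
    auto_derive; [exact I | ring]. }
  destruct (MVT_cor2 g (fun z => (z - c) * f2 z) x y Hxy) as (z & Hgap & Hz).
  { intros z _. apply is_derive_Reals, Hg. }
  assert (0 < (z - c) * f2 z * (y - x)).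
  { apply Rmult_lt_0_compat; [apply Rmult_lt_0_compat, Hf2|]; lra. }
  unfold g in Hgap. lra.
Qed.

Section Psi.

Variables a b sigma rho : R.
Hypotheses (hb : 0 < b) (hsigma : 0 < sigma) (hrho : 0 < rho).

Let nu := rho / b.
Let slope := sqrt (2 * b) / sigma.
Let arg x := (b * x - a) / (sigma * b) * sqrt (2 * b).

Definition psi_deriv n x := slope ^ n / Gamma_fn nu * gauss_moment nu n (arg x).

Lemma order_pos : 0 < nu.
Proof. apply Rdiv_lt_0_compat; assumption. Qed.

Lemma psi_deriv_pos n x : 0 < psi_deriv n x.
Proof.
  unfold psi_deriv. apply Rmult_lt_0_compat; [apply Rdiv_lt_0_compat|].
  - apply pow_lt, Rdiv_lt_0_compat; [apply sqrt_lt_R0; lra | exact hsigma].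
  - apply Gamma_fn_pos, order_pos.
  - apply gauss_moment_spec, order_pos.
Qed.

Lemma is_derive_psi_deriv n x : is_derive (psi_deriv n) x (psi_deriv (S n) x).
Proof.
  assert (Harg : is_derive arg x slope).
  { unfold arg, slope. auto_derive; [exact I | field; lra]. }
  pose proof (is_derive_comp _ _ x _ _ (is_derive_gauss_moment nu n (arg x) order_pos) Harg) as Hcomp.
  unfold psi_deriv. replace (slope ^ S n / Gamma_fn nu * gauss_moment nu (S n) (arg x))
    with (scal (slope ^ n / Gamma_fn nu) (scal slope (gauss_moment nu (S n) (arg x)))).
  - apply (is_derive_scal (fun x => gauss_moment nu n (arg x))), Hcomp.
  - unfold scal; simpl; unfold mult; simpl. field.
    apply Rgt_not_eq, Gamma_fn_pos, order_pos.
Qed.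

Lemma Derive_psi_deriv n : Derive (psi_deriv n) = psi_deriv (S n).
Proof.
  apply functional_extensionality. intros x. apply is_derive_unique, is_derive_psi_deriv.
Qed.

(* The Gaussian prefactor of [D_par] cancels [exp ((b x - a)^2 / (2 sigma^2 b))]. *)
Lemma psi_eq_psi_deriv0 : psi a b sigma rho = psi_deriv 0.
Proof.
  apply functional_extensionality. intros x.
  unfold psi, D_par, psi_deriv, gauss_moment.
  replace (- (- rho / b)) with nu by (unfold nu; field; lra).
  replace (fun t => Rpower t (nu - 1) * exp (- t ^ 2 / 2 - - (b * x - a) / (sigma * b) * sqrt (2 * b) * t))
    with (gauss_integrand nu 0 (arg x)).
  2: { apply functional_extensionality. intros t. unfold gauss_integrand, arg.
       rewrite pow_O, Rmult_1_l. do 2 f_equal. field. lra. }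
  assert (Hcancel : exp ((b * x - a) ^ 2 / (2 * sigma ^ 2 * b)) *
                    exp (- (- (b * x - a) / (sigma * b) * sqrt (2 * b)) ^ 2 / 4) = 1).
  { rewrite <- exp_plus, <- exp_0. f_equal.
    replace ((- (b * x - a) / (sigma * b) * sqrt (2 * b)) ^ 2)
      with (((b * x - a) / (sigma * b)) ^ 2 * sqrt (2 * b) ^ 2) by (unfold Rdiv; ring).
    rewrite pow2_sqrt by lra. field. lra. }
  rewrite <- Rmult_assoc, Rmult_div_assoc, Hcancel. simpl. field.
  apply Rgt_not_eq, Gamma_fn_pos, order_pos.
Qed.

End Psi.

Theorem corollary4p6 (a b sigma rho c x0 xinf : R)
  (hb : 0 < b) (hsigma : 0 < sigma) (hrho : 0 < rho) (hc : 0 < c)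
  (hx0 : c < x0)
  (hx0root : (x0 - c) * Derive (psi a b sigma rho) x0 - psi a b sigma rho x0 = 0)
  (hx0uniq : forall y, c < y ->
     (y - c) * Derive (psi a b sigma rho) y - psi a b sigma rho y = 0 -> y = x0)
  (hxinf : c < xinf)
  (hxinfroot : (xinf - c) * Derive_n (psi a b sigma rho) 2 xinf
               - Derive (psi a b sigma rho) xinf = 0)
  (hxinfuniq : forall y, c < y ->
     (y - c) * Derive_n (psi a b sigma rho) 2 y - Derive (psi a b sigma rho) y = 0 ->
     y = xinf) :
  (forall x, x < x0 ->
     (x - c) * Derive (psi a b sigma rho) x - psi a b sigma rho x < 0) /\
  (forall x, xinf < x ->
     (x - c) * Derive_n (psi a b sigma rho) 2 x - Derive (psi a b sigma rho) x > 0).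
Proof.
  change (Derive_n (psi a b sigma rho) 2) with (Derive (Derive (psi a b sigma rho))) in *.
  rewrite (psi_eq_psi_deriv0 a b sigma rho hb hsigma hrho),
    !(Derive_psi_deriv a b sigma rho hb hsigma hrho) in *.
  pose proof (psi_deriv_pos a b sigma rho hb hsigma hrho) as Hpos.
  pose proof (is_derive_psi_deriv a b sigma rho hb hsigma hrho) as Hder.
  split.
  - intros x Hx. destruct (Rle_or_lt x c) as [Hxc | Hxc].
    + pose proof (Hpos 0%nat x). pose proof (Hpos 1%nat x).
      assert ((x - c) * psi_deriv a b sigma rho 1 x <= 0) by (apply Rmult_le_0_r; lra).
      lra.
    + rewrite <- hx0root.
      apply (tangent_gap_increasing _ _ (psi_deriv a b sigma rho 2)); auto; lra.
  - intros x Hx. rewrite <- hxinfroot.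
    apply (tangent_gap_increasing _ _ (psi_deriv a b sigma rho 3)); auto; lra.
Qed.
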